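(* There is a bijection $F : C_{n+1} \to S_n$ such that for each $\pi \in C_{n+1}$ and each $\ell \in [n]$, $\mathrm{Exc}(\pi) = \{1,\dots,\ell\}$ if and only if $\mathrm{DesBot}(F(\pi)) = \{1,\dots,\ell-1\}$.
   Context: $C_{n+1}$ is the set of $(n+1)$-cycles, i.e. permutations of $[n+1]$ consisting of a single cycle of length $n+1$. For $\pi \in S_{n+1}$, $\mathrm{Exc}(\pi) = \{i \in [n] : \pi(i) > i\}$. For $p \in S_n$, the descent bottoms set is $\mathrm{DesBot}(p) = \{p(i) : 2\le i\le n,\ p(i) < p(i-1)\}$. *)

From mathcomp Require Import all_boot all_order all_fingroup.
Set Implicit Arguments. Unset Strict Implicit. Unset Printing Implicit Defensive.

(* Permutations of [m] = {1,...,m} are modelled as 'S_m, acting on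
   'I_m = {0,...,m-1}; the element j : 'I_m stands for j+1 in [m].
   All sets below (Exc, DesBot) are predicates on nat in the paper's
   1-indexed convention. *)

Definition is_full_cycle (n : nat) (pi : 'S_n.+1) : bool := #|porbits pi| == 1.

Definition Cyc (n : nat) := sig (fun s : 'S_n.+1 => is_full_cycle s).

Definition Exc (n : nat) (pi : 'S_n.+1) (i : nat) : bool :=
  [exists j : 'I_n.+1, [&& j.+1 == i, j < n & j < pi j]].

Definition DesBot (n : nat) (p : 'S_n) (v : nat) : bool :=
  [exists i : 'I_n, exists j : 'I_n,
     [&& (i : nat) == j.+1, p i < p j & v == (p i).+1]].

From mathcomp Require Import all_boot all_order all_fingroup.
From mathcomp Require Import zify.
Set Implicit Arguments. Unset Strict Implicit. Unset Printing Implicit Defensive.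

(* Read the cycle pi^-1 from the letter 1: the word pi^-1(1), ..., pi^-n(1)
   uses each of 2, ..., n+1 once, and lowering its letters by one gives F(pi)
   in one-line notation. As pi sends each letter of this word to the previous
   one (and 1 to the last), a letter x > 1 is an excedance of pi exactly when
   x is a descent bottom of the word, while 1 is always an excedance. Hence
   Exc(pi) = {1} u (DesBot(F pi) + 1). *)

Local Open Scope group_scope.

Section FullCycle.
Variables (T : finType) (s : {perm T}).
Hypothesis s_full : #|porbits s| = 1%N.

Lemma porbit_full x : porbit s x = [set: T].
Proof.
have /cards1P[A porbitsE] : #|porbits s| == 1%N by apply/eqP.
have porbitE y : porbit s y = A.
  by apply/set1P; rewrite -porbitsE imset_f.
by apply/setP=> y; rewrite inE porbitE -(porbitE y) porbit_id.
Qed.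

Lemma card_porbit_full x : #|porbit s x| = #|T|.
Proof. by rewrite porbit_full cardsT. Qed.

Lemma iter_full_cycle_onto x y : exists2 m, m < #|T| & y = iter m s x.
Proof.
have : y \in porbit s x by rewrite porbit_full inE.
by rewrite porbit_traject card_porbit_full => /trajectP.
Qed.

Lemma iter_full_cycle_inj x : {in gtn #|T| &, injective (fun m => iter m s x)}.
Proof.
move=> a b; rewrite !inE => lta ltb.
have uniq_orbit := uniq_traject_porbit s x; rewrite card_porbit_full in uniq_orbit.
rewrite -(nth_traject s lta) -(nth_traject s ltb) => /eqP.
by rewrite nth_uniq ?size_traject // => /eqP.
Qed.

Lemma iter_full_cycle_period x : iter #|T| s x = x.
Proof. by rewrite -(card_porbit_full x) iter_porbit. Qed.

End FullCycle.

Lemma full_cycleV n (p : 'S_n.+1) : is_full_cycle p -> #|porbits p^-1| = 1%N.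
Proof. by rewrite porbitsV => /eqP. Qed.

Definition cycle_pt n (p : 'S_n.+1) m : 'I_n.+1 := iter m p^-1 ord0.
Arguments cycle_pt : simpl never.

Lemma perm_cycle_ptS n (p : 'S_n.+1) m : p (cycle_pt p m.+1) = cycle_pt p m.
Proof. by rewrite /cycle_pt iterS permKV. Qed.

(* The default [i] is never used: [cycle_pt p i.+1] is nonzero for a full cycle. *)
Definition word_fun n (p : 'S_n.+1) (i : 'I_n) : 'I_n :=
  odflt i (unlift ord0 (cycle_pt p i.+1)).

Section CycleWord.
Variables (n : nat) (p : 'S_n.+1).
Hypothesis p_full : is_full_cycle p.

Let pV_full := full_cycleV p_full.

Lemma cycle_pt_onto x : exists2 m, m < n.+1 & x = cycle_pt p m.
Proof. by have := iter_full_cycle_onto pV_full ord0 x; rewrite card_ord. Qed.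

Lemma cycle_pt_inj : {in gtn n.+1 &, injective (cycle_pt p)}.
Proof. by have := iter_full_cycle_inj (x := ord0) pV_full; rewrite card_ord. Qed.

Lemma cycle_pt_period : cycle_pt p n.+1 = ord0.
Proof. by have := iter_full_cycle_period pV_full ord0; rewrite card_ord. Qed.

Lemma cycle_pt_gt0 m : 0 < m < n.+1 -> 0 < cycle_pt p m.
Proof.
case/andP=> m_gt0 lt_m; rewrite lt0n; apply: contraTneq m_gt0 => pt_m0.
have : cycle_pt p m = cycle_pt p 0 by apply: val_inj.
by move/cycle_pt_inj => ->.
Qed.

Lemma lift_word_fun i : lift ord0 (word_fun p i) = cycle_pt p i.+1.
Proof.
rewrite /word_fun; case: unliftP => [j -> //| E].
by have := cycle_pt_gt0 (m := i.+1); rewrite E => /(_ (ltn_ord i)).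
Qed.

Lemma word_fun_inj : injective (word_fun p).
Proof.
move=> i j /(congr1 (lift ord0)); rewrite !lift_word_fun.
by move/cycle_pt_inj; rewrite !inE !ltnS !ltn_ord => /(_ isT isT) [] /val_inj.
Qed.

End CycleWord.

Lemma perm_cycle_pt_eq n (p q : 'S_n.+1) :
  is_full_cycle p -> is_full_cycle q ->
  (forall m, m <= n -> cycle_pt p m = cycle_pt q m) -> p = q.
Proof.
move=> p_full q_full eq_pt; apply: invg_inj; apply/permP=> x.
have [m lt_m ->] := cycle_pt_onto p_full x.
have stepV (r : 'S_n.+1) k : r^-1 (cycle_pt r k) = cycle_pt r k.+1 by [].
rewrite stepV (eq_pt _ lt_m) stepV.
move: lt_m; rewrite ltnS leq_eqVlt => /predU1P[->|lt_mn]; last exact: eq_pt.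
by rewrite (cycle_pt_period p_full) (cycle_pt_period q_full).
Qed.

Definition cycle_word n (pi : Cyc n) : 'S_n := perm (word_fun_inj (valP pi)).

Lemma cycle_wordE n (pi : Cyc n) i :
  (cycle_word pi i).+1 = cycle_pt (sval pi) i.+1.
Proof. by rewrite permE -lift0 lift_word_fun //; apply: valP. Qed.

Lemma cycle_word_inj n : injective (@cycle_word n).
Proof.
move=> [p p_full] [q q_full] /= eq_word; apply/val_inj => /=.
apply: perm_cycle_pt_eq => // -[|m] lt_m; first by [].
have := cycle_wordE (exist _ p p_full) (Ordinal lt_m).
by rewrite eq_word cycle_wordE => /= /val_inj.
Qed.

Section WordCycle.
Variables (n : nat) (u : 'S_n).

Definition word_seq : seq 'I_n.+1 := ord0 :: [seq lift ord0 (u i) | i <- enum 'I_n].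

Lemma word_seq_uniq : uniq word_seq.
Proof.
rewrite /= map_inj_uniq ?enum_uniq ?andbT.
  by apply/mapP => -[i _] /eqP; rewrite (negbTE (neq_lift _ _)).
by move=> i j /lift_inj /perm_inj.
Qed.

Lemma size_word_seq : size word_seq = n.+1.
Proof. by rewrite /= size_map size_enum_ord. Qed.

Lemma nth_word_seq (i : 'I_n) : nth ord0 word_seq i.+1 = lift ord0 (u i).
Proof. by rewrite /= (nth_map i) ?size_enum_ord ?nth_ord_enum. Qed.

Lemma mem_word_seq x : x \in word_seq.
Proof.
case: (unliftP ord0 x) => [j ->|->]; last by rewrite inE eqxx.
by rewrite inE; apply/orP; right; apply/mapP; exists (u^-1 j); rewrite ?mem_enum ?permKV.
Qed.

Definition word_cycle : 'S_n.+1 := perm (can_inj (prev_next word_seq_uniq)).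

Lemma iter_word_cycle k : k < n.+1 -> iter k word_cycle ord0 = nth ord0 word_seq k.
Proof.
elim: k => [//|k IH] lt_k; rewrite iterS IH 1?ltnW // permE.
rewrite next_nth mem_nth ?size_word_seq 1?ltnW //.
by rewrite index_uniq ?size_word_seq 1?ltnW // word_seq_uniq.
Qed.

Lemma word_cycle_full : is_full_cycle word_cycle^-1.
Proof.
rewrite /is_full_cycle porbitsV; apply/cards1P; exists (porbit word_cycle ord0).
apply/setP=> A; rewrite inE; apply/imsetP/eqP => [[x _ ->]|->]; last by exists ord0.
apply/eqP; rewrite eq_porbit_mem.
have := mem_word_seq x; rewrite -index_mem size_word_seq => lt_idx.
by rewrite -(nth_index ord0 (mem_word_seq x)) -iter_word_cycle // -permX mem_porbit.
Qed.

End WordCycle.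

Definition cycle_of_word n (u : 'S_n) : Cyc n :=
  exist _ (word_cycle u)^-1 (word_cycle_full u).

Lemma cycle_of_wordK n : cancel (@cycle_of_word n) (@cycle_word n).
Proof.
move=> u; apply/permP=> i; apply/val_inj/eq_add_S.
rewrite cycle_wordE [sval _]/= /cycle_pt invgK (@iter_word_cycle _ u i.+1) ?ltnS //.
by rewrite nth_word_seq lift0.
Qed.

Lemma cycle_word_bij n : bijective (@cycle_word n).
Proof.
exists (@cycle_of_word n); last exact: cycle_of_wordK.
exact: inj_can_sym (@cycle_of_wordK n) (@cycle_word_inj n).
Qed.

Lemma Exc0 n (p : 'S_n.+1) : Exc p 0 = false.
Proof. by apply/existsP=> -[j /and3P[]]. Qed.

Lemma DesBot0 n (u : 'S_n) : DesBot u 0 = false.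
Proof. by apply/existsP=> -[i /existsP[j /and3P[]]]. Qed.

Lemma Exc1 n (p : 'S_n.+1) : is_full_cycle p -> Exc p 1%N = (0 < n).
Proof.
move=> p_full; apply/existsP/idP => [[j /and3P[/eqP[->] //]]|n_gt0].
exists ord0; rewrite eqxx n_gt0 /= -(cycle_pt_period p_full) perm_cycle_ptS.
by rewrite (cycle_pt_gt0 p_full) ?n_gt0 ?ltnSn.
Qed.

(* With x = cycle_pt p m.+1, the excedance x < p x reads
   cycle_pt p m.+1 < cycle_pt p m; m = 0 never contributes as p x = 0 then. *)
Lemma Exc_DesBot n (pi : Cyc n) k :
  Exc (sval pi) k.+2 = DesBot (cycle_word pi) k.+1.
Proof.
case: pi => p p_full; set pi := exist _ p p_full.
have word i : (cycle_word pi i).+1 = cycle_pt p i.+1 := cycle_wordE pi i.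
apply/existsP/existsP => /= [[x /and3P[/eqP[xE] _ lt_x]] | [i /existsP[j]]].
- have [[|[|m]] lt_m xE'] := cycle_pt_onto p_full x; rewrite xE' in xE lt_x.
  + by move: xE.
  + by move: lt_x; rewrite perm_cycle_ptS.
  have lt_m1 : m.+1 < n by rewrite -ltnS.
  exists (Ordinal lt_m1); apply/existsP; exists (Ordinal (ltnW lt_m1)).
  have := word (Ordinal lt_m1); have := word (Ordinal (ltnW lt_m1)).
  rewrite perm_cycle_ptS in lt_x; rewrite eqxx /=; lia.
- case/and3P => /eqP ij lt_ij /eqP kE.
  exists (cycle_pt p i.+1); rewrite perm_cycle_ptS ij.
  have := word i; have := word j; have := ltn_ord (cycle_pt p j.+1).
  rewrite ij in lt_ij *; lia.
Qed.

Local Close Scope group_scope.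

Theorem mainTheorem8 (n : nat) :
  exists F : Cyc n -> 'S_n,
    bijective F /\
    forall (pi : Cyc n) (l : nat), 1 <= l <= n ->
      ((forall k : nat, Exc (sval pi) k = (1 <= k <= l)) <->
       (forall k : nat, DesBot (F pi) k = (1 <= k <= l - 1))).
Proof.
exists (@cycle_word n); split; first exact: cycle_word_bij.
move=> pi l /andP[l_gt0 le_ln].
have Exc_1 : Exc (sval pi) 1 by rewrite Exc1 ?(leq_trans l_gt0 le_ln) //; apply: valP.
split=> excE k.
- case: k => [|k]; first by rewrite DesBot0.
  by rewrite -Exc_DesBot excE; lia.
- case: k => [|[|k]]; first by rewrite Exc0.
  + by rewrite Exc_1 l_gt0.
  + by rewrite Exc_DesBot excE; lia.
Qed.
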